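(* Let $\mathcal{G}$ be the real Lie algebra with basis $X_1,X_2,X_3$ and brackets $[X_1,X_2]=0$, $[X_2,X_3]=X_1$, $[X_3,X_1]=X_2$ (Bianchi type $VII_0$). Every real Manin triple $(\mathcal{D},\mathcal{G}',\tilde{\mathcal{G}}')$ with $\mathcal{G}'\cong\mathcal{G}$ is isomorphic to exactly one Manin triple $(\mathcal{D},\mathcal{G},\tilde{\mathcal{G}})$ in which $\tilde{\mathcal{G}}$, in the basis $\tilde X^1,\tilde X^2,\tilde X^3$ dual to $X_1,X_2,X_3$, has one of the following bracket structures: (a) (Bianchi $I$) all brackets zero; (b) (Bianchi $II$) (i) $[\tilde X^1,\tilde X^2]=\tilde X^3$, $[\tilde X^2,\tilde X^3]=0$, $[\tilde X^3,\tilde X^1]=0$; (ii) $[\tilde X^1,\tilde X^2]=-\tilde X^3$, $[\tilde X^2,\tilde X^3]=0$, $[\tilde X^3,\tilde X^1]=0$; (c) (Bianchi $IV$) $[\tilde X^1,\tilde X^2]=b(-\tilde X^2+\tilde X^3)$, $[\tilde X^2,\tilde X^3]=0$, $[\tilde X^3,\tilde X^1]=b\tilde X^3$, $b\in\mathbb{R}\setminus\{0\}$; (d) (Bianchi $V$) (i) $[\tilde X^1,\tilde X^2]=-\tilde X^2$, $[\tilde X^2,\tilde X^3]=0$, $[\tilde X^3,\tilde X^1]=\tilde X^3$; (ii) $[\tilde X^1,\tilde X^2]=0$, $[\tilde X^2,\tilde X^3]=b\tilde X^2$, $[\tilde X^3,\tilde X^1]=-b\tilde X^1$, $b>0$.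
   Context: A real Manin triple $(\mathcal{D},\mathcal{G},\tilde{\mathcal{G}})$ consists of a real Lie algebra $\mathcal{D}$ with a symmetric, ad-invariant, nondegenerate bilinear form $\langle\cdot,\cdot\rangle$, and two maximally isotropic Lie subalgebras $\mathcal{G},\tilde{\mathcal{G}}$ with $\mathcal{D}=\mathcal{G}\oplus\tilde{\mathcal{G}}$ as vector spaces; here $\dim\mathcal{D}=6$, $\dim\mathcal{G}=\dim\tilde{\mathcal{G}}=3$. Bases $X_i$ of $\mathcal{G}$ and $\tilde X^i$ of $\tilde{\mathcal{G}}$ are dual if $\langle X_i,X_j\rangle=0$, $\langle X_i,\tilde X^j\rangle=\delta_i^j$, $\langle\tilde X^i,\tilde X^j\rangle=0$. If $[X_i,X_j]=f_{ij}{}^kX_k$ and $[\tilde X^i,\tilde X^j]=\tilde f^{ij}{}_k\tilde X^k$, ad-invariance forces $[X_i,\tilde X^j]=f_{ki}{}^j\tilde X^k+\tilde f^{jk}{}_iX_k$, so the triple is determined by the brackets of $\mathcal{G}$ and $\tilde{\mathcal{G}}$ in dual bases. Two Manin triples are isomorphic if there is a Lie algebra isomorphism of the doubles preserving the bilinear forms and mapping first subalgebra to first subalgebra and second to second; equivalently, they are related by a change of basis $X_i'=X_kA^k{}_i$, $\tilde X'^j=(A^{-1})^j{}_k\tilde X^k$. Different values of the parameter $b$ give non-isomorphic triples. *)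

From HB Require Import structures.
From mathcomp Require Import all_boot all_order all_algebra.
From mathcomp Require Import reals.
Set Implicit Arguments. Unset Strict Implicit. Unset Printing Implicit Defensive.
Import Order.TTheory GRing.Theory Num.Theory.
Local Open Scope ring_scope.

Section Manin.
Variable R : realType.

(* Structure constants of a 3-dim Lie algebra in a basis:
   sc i j k = coefficient of the k-th basis vector in [e_i, e_j]. *)
Definition sc := 'I_3 -> 'I_3 -> 'I_3 -> R.

(* An element of the 6-dim double D = G (+) G~ in the basis
   X_1,X_2,X_3, X~^1,X~^2,X~^3 : (coordinates on X_i, coordinates on X~^i). *)
Definition dvec := (('I_3 -> R) * ('I_3 -> R))%type.

(* The bracket on D determined by [X_i,X_j] = f_ij^k X_k,
   [X~^i,X~^j] = ft^ij_k X~^k, [X_i,X~^j] = f_ki^j X~^k + ft^jk_i X_k,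
   extended bilinearly (and [X~^j,X_i] = -[X_i,X~^j]). *)
Definition dbr (f ft : sc) (u v : dvec) : dvec :=
  (fun k => \sum_(i < 3) \sum_(j < 3)
       (u.1 i * v.1 j * f i j k + u.1 i * v.2 j * ft j k i
        - u.2 j * v.1 i * ft j k i),
   fun k => \sum_(i < 3) \sum_(j < 3)
       (u.2 i * v.2 j * ft i j k + u.1 i * v.2 j * f k i j
        - u.2 j * v.1 i * f k i j)).

Definition dadd (u v : dvec) : dvec := (fun k => u.1 k + v.1 k, fun k => u.2 k + v.2 k).

Definition dform (u v : dvec) : R := \sum_(i < 3) (u.1 i * v.2 i + u.2 i * v.1 i).

Definition antisym (c : sc) := forall i j k, c i j k = - c j i k.

Definition is_manin (f ft : sc) : Prop :=
  [/\ antisym f, antisym ft,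
      (forall u v w : dvec,
          dadd (dadd (dbr f ft u (dbr f ft v w)) (dbr f ft v (dbr f ft w u)))
               (dbr f ft w (dbr f ft u v)) = ((fun _ => 0), (fun _ => 0))) &
      (forall u v w : dvec, dform (dbr f ft u v) w = dform u (dbr f ft v w))].

(* Change of basis X'_i = X_k A^k_i sends structure constants c to c'. *)
Definition basis_change (A : 'M[R]_3) (c c' : sc) : Prop :=
  forall i j l, \sum_(a < 3) \sum_(b < 3) A a i * A b j * c a b l
              = \sum_(k < 3) c' i j k * A l k.

Definition lie_iso (f f' : sc) : Prop :=
  exists A : 'M[R]_3, A \in unitmx /\ basis_change A f f'.

(* Isomorphism of Manin triples: X'_i = X_k A^k_i, X~'^j = (A^-1)^j_k X~^k. *)
Definition manin_iso (f ft f' ft' : sc) : Prop :=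
  exists A : 'M[R]_3, [/\ A \in unitmx, basis_change A f f'
                        & basis_change (invmx A)^T ft ft'].

Definition vec3 (a b c : R) : 'I_3 -> R :=
  fun k => if val k == 0%N then a else if val k == 1%N then b else c.

Definition mk_sc (c12 c23 c31 : 'I_3 -> R) : sc :=
  fun i j k =>
    match val i, val j with
    | 0%N, 1%N => c12 k | 1%N, 0%N => - c12 k
    | 1%N, 2%N => c23 k | 2%N, 1%N => - c23 k
    | 2%N, 0%N => c31 k | 0%N, 2%N => - c31 k
    | _, _ => 0
    end.

Definition v0 : 'I_3 -> R := vec3 0 0 0.

Definition f_VII0 : sc := mk_sc v0 (vec3 1 0 0) (vec3 0 1 0).

Inductive dual_case : Type :=
  | CaseI | CaseIIi | CaseIIii | CaseIV of R | CaseVi | CaseVii of R.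

Definition case_valid (c : dual_case) : Prop :=
  match c with
  | CaseIV b => b != 0
  | CaseVii b => 0 < b
  | _ => True
  end.

Definition case_sc (c : dual_case) : sc :=
  match c with
  | CaseI => mk_sc v0 v0 v0
  | CaseIIi => mk_sc (vec3 0 0 1) v0 v0
  | CaseIIii => mk_sc (vec3 0 0 (-1)) v0 v0
  | CaseIV b => mk_sc (vec3 0 (-b) b) v0 (vec3 0 0 b)
  | CaseVi => mk_sc (vec3 0 (-1) 0) v0 (vec3 0 0 1)
  | CaseVii b => mk_sc v0 (vec3 0 b 0) (vec3 (-b) 0 0)
  end.

End Manin.

(* A Lie isomorphism onto the standard VII_0 carries the Manin triple to one
   whose first algebra is VII_0 in the basis X_1, X_2, X_3 (the Manin axioms are
   invariant under such basis changes).  There the mixed Jacobi identities of the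
   double force the dual brackets into a four-parameter family (p1, p2, p3, q2)
   with p3 q2 = 0.  The remaining freedom is an automorphism of VII_0: a
   rotation-dilation (a, b) of the X_1 X_2 plane, a sign e on X_3 and a shift
   (x, y) of X_3 along that plane.  It multiplies q2 by e, scales p3 and
   p1^2 + p2^2 by a^2 + b^2 when q2 = 0, and lets q2 <> 0 absorb p1 and p2.
   Hence q2^2, the sign of p3, the vanishing of (p1, p2) and the ratio
   (p1^2 + p2^2) / p3 separate the orbits, each of which contains exactly one of
   the listed normal forms. *)

From HB Require Import structures.
From mathcomp Require Import all_boot all_order all_algebra.
From mathcomp Require Import reals.
From mathcomp Require Import ring lra.
From Stdlib Require Import FunctionalExtensionality.
Set Implicit Arguments. Unset Strict Implicit. Unset Printing Implicit Defensive.
Import Order.TTheory GRing.Theory Num.Theory.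
Local Open Scope ring_scope.

Definition o0 : 'I_3 := @Ordinal 3 0 isT.
Definition o1 : 'I_3 := @Ordinal 3 1 isT.
Definition o2 : 'I_3 := @Ordinal 3 2 isT.

Lemma ord3P (i : 'I_3) : [\/ i = o0, i = o1 | i = o2].
Proof.
case: i => [[|[|[|n]]] Hn]; last by [].
- by apply: Or31; apply: val_inj.
- by apply: Or32; apply: val_inj.
- by apply: Or33; apply: val_inj.
Qed.

Lemma sum3 (V : nmodType) (F : 'I_3 -> V) : \sum_(i < 3) F i = F o0 + F o1 + F o2.
Proof.
rewrite !big_ord_recr big_ord0 /= add0r.
by congr (F _ + F _ + F _); apply: val_inj.
Qed.

Ltac expand_sums := rewrite ?sum3 ?mxE ?sum3 ?mxE.

Section StructureConstants.
Variable R : realType.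
Implicit Types (c d : sc R) (A M X Y : 'M[R]_3).

Lemma sc_ext c d : (forall i j k, c i j k = d i j k) -> c = d.
Proof.
move=> e; apply: functional_extensionality => i.
by apply: functional_extensionality => j; apply: functional_extensionality => k.
Qed.

Definition contr1 X c : sc R := fun i j l => \sum_(a < 3) X a i * c a j l.
Definition contr2 X c : sc R := fun i j l => \sum_(b < 3) X b j * c i b l.
Definition contr3 X c : sc R := fun i j l => \sum_(k < 3) X l k * c i j k.
Definition contr12 X c := contr1 X (contr2 X c).

Lemma contr1M X Y c : contr1 X (contr1 Y c) = contr1 (Y *m X) c.
Proof. by apply: sc_ext => i j l; rewrite /contr1; expand_sums; ring. Qed.
Lemma contr2M X Y c : contr2 X (contr2 Y c) = contr2 (Y *m X) c.
Proof. by apply: sc_ext => i j l; rewrite /contr2; expand_sums; ring. Qed.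
Lemma contr3M X Y c : contr3 X (contr3 Y c) = contr3 (X *m Y) c.
Proof. by apply: sc_ext => i j l; rewrite /contr3; expand_sums; ring. Qed.
Lemma contr12C X Y c : contr1 X (contr2 Y c) = contr2 Y (contr1 X c).
Proof. by apply: sc_ext => i j l; rewrite /contr1 /contr2; expand_sums; ring. Qed.
Lemma contr13C X Y c : contr1 X (contr3 Y c) = contr3 Y (contr1 X c).
Proof. by apply: sc_ext => i j l; rewrite /contr1 /contr3; expand_sums; ring. Qed.
Lemma contr23C X Y c : contr2 X (contr3 Y c) = contr3 Y (contr2 X c).
Proof. by apply: sc_ext => i j l; rewrite /contr2 /contr3; expand_sums; ring. Qed.

Lemma contr1_id c : contr1 1%:M c = c.
Proof.
apply: sc_ext => i j l; rewrite /contr1; expand_sums.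
by case: (ord3P i) => ->; rewrite /=; ring.
Qed.
Lemma contr2_id c : contr2 1%:M c = c.
Proof.
apply: sc_ext => i j l; rewrite /contr2; expand_sums.
by case: (ord3P j) => ->; rewrite /=; ring.
Qed.
Lemma contr3_id c : contr3 1%:M c = c.
Proof.
apply: sc_ext => i j l; rewrite /contr3; expand_sums.
by case: (ord3P l) => ->; rewrite /=; ring.
Qed.

Lemma contr12M X Y c : contr12 X (contr12 Y c) = contr12 (Y *m X) c.
Proof. by rewrite /contr12 contr12C contr1M -contr12C contr2M contr12C. Qed.
Lemma contr12_3C X Y c : contr12 X (contr3 Y c) = contr3 Y (contr12 X c).
Proof. by rewrite /contr12 contr23C contr13C. Qed.
Lemma contr12_id c : contr12 1%:M c = c.
Proof. by rewrite /contr12 contr2_id contr1_id. Qed.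

Lemma basis_changeE M c c' : basis_change M c c' <-> contr12 M c = contr3 M c'.
Proof.
have -> : contr12 M c = fun i j l => \sum_(a < 3) \sum_(b < 3) M a i * M b j * c a b l.
  by apply: sc_ext => i j l; rewrite /contr12 /contr1 /contr2; expand_sums; ring.
have -> : contr3 M c' = fun i j l => \sum_(k < 3) c' i j k * M l k.
  by apply: sc_ext => i j l; rewrite /contr3; expand_sums; ring.
split=> [e | e i j l]; first exact: sc_ext.
exact: (congr1 (fun g : sc R => g i j l) e).
Qed.

Lemma basis_changeV M c c' : M \in unitmx -> basis_change M c c' ->
  basis_change (invmx M) c' c.
Proof.
move=> uM /basis_changeE e; apply/basis_changeE.
have -> : c' = contr3 (invmx M) (contr12 M c) by rewrite e contr3M mulVmx // contr3_id.
by rewrite contr12_3C contr12M mulmxV // contr12_id.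
Qed.

Lemma basis_changeM M N c c' c'' : basis_change M c c' -> basis_change N c' c'' ->
  basis_change (M *m N) c c''.
Proof.
move=> /basis_changeE e1 /basis_changeE e2; apply/basis_changeE.
by rewrite -contr12M e1 contr12_3C e2 contr3M.
Qed.

Lemma basis_change_uniq M c c1 c2 : M \in unitmx ->
  basis_change M c c1 -> basis_change M c c2 -> c1 = c2.
Proof.
move=> uM /basis_changeE e1 /basis_changeE; rewrite e1 => e2.
by rewrite -[c1]contr3_id -[c2]contr3_id -(mulVmx uM) -!contr3M e2.
Qed.

Lemma basis_change_preimage M c' : M \in unitmx -> exists c, basis_change M c c'.
Proof.
move=> uM; exists (contr12 (invmx M) (contr3 M c')); apply/basis_changeE.
by rewrite contr12M mulVmx // contr12_id.
Qed.

Lemma antisym_basis_change M c c' : M \in unitmx -> basis_change M c c' ->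
  antisym c -> antisym c'.
Proof.
move=> uM /basis_changeE e Ac.
have -> : c' = contr3 (invmx M) (contr12 M c).
  by rewrite e contr3M mulVmx // contr3_id.
have c0 a l : c a a l = 0 by have := Ac a a l; lra.
move=> i j l; rewrite /contr3 -sumrN; apply: eq_bigr => k _.
rewrite /contr12 /contr1 /contr2; expand_sums.
by rewrite !c0 !(Ac o1 o0) !(Ac o2 o0) !(Ac o2 o1); ring.
Qed.

End StructureConstants.

Section ManinTransport.
Variable R : realType.

Definition manin_map (A : 'M[R]_3) (u : dvec R) : dvec R :=
  (fun k => \sum_(i < 3) A k i * u.1 i, fun k => \sum_(i < 3) invmx A i k * u.2 i).

Variables (A : 'M[R]_3) (f ft f' ft' : sc R).
Hypotheses (uA : A \in unitmx) (Hf : basis_change A f f')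
  (Hft : basis_change (invmx A)^T ft ft').

Lemma manin_map_invK : cancel (manin_map (invmx A)) (manin_map A).
Proof.
case=> u1 u2; rewrite /manin_map invmxK /=.
congr pair; apply: functional_extensionality => k.
- transitivity (\sum_(k' < 3) (A *m invmx A) k k' * u1 k'); first by expand_sums; ring.
  by rewrite mulmxV //; expand_sums; case: (ord3P k) => ->; rewrite /=; ring.
- transitivity (\sum_(k' < 3) (A *m invmx A) k' k * u2 k'); first by expand_sums; ring.
  by rewrite mulmxV //; expand_sums; case: (ord3P k) => ->; rewrite /=; ring.
Qed.

Lemma manin_map_dadd u v :
  manin_map A (dadd u v) = dadd (manin_map A u) (manin_map A v).
Proof.
rewrite /manin_map /dadd /=; congr pair; apply: functional_extensionality => k;
  by expand_sums; ring.
Qed.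

Lemma manin_map0 :
  manin_map A ((fun _ => 0), (fun _ => 0)) = ((fun _ => 0), (fun _ => 0)).
Proof.
rewrite /manin_map /=; congr pair; apply: functional_extensionality => k;
  by expand_sums; ring.
Qed.

Lemma dform_manin_map u v : dform (manin_map A u) (manin_map A v) = dform u v.
Proof.
transitivity (\sum_(i < 3) \sum_(j < 3)
                (u.1 i * v.2 j + u.2 j * v.1 i) * (invmx A *m A) j i).
  by rewrite /dform /manin_map /=; expand_sums; ring.
by rewrite mulVmx // /dform; expand_sums; rewrite /=; ring.
Qed.

Lemma manin_map_dbr u v :
  manin_map A (dbr f' ft' u v) = dbr f ft (manin_map A u) (manin_map A v).
Proof.
have /basis_changeE Ef := Hf; have /basis_changeE Eft := Hft.
have Ef_mixed : contr1 (invmx A) f' = contr2 A (contr3 (invmx A) f).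
  have -> : f' = contr3 (invmx A) (contr12 A f).
    by rewrite Ef contr3M mulVmx // contr3_id.
  by rewrite /contr12 contr13C contr1M mulmxV // contr1_id contr23C.
have Eft_mixed : contr2 A^T ft' = contr1 (invmx A)^T (contr3 A^T ft).
  have -> : ft' = contr3 A^T (contr12 (invmx A)^T ft).
    by rewrite Eft contr3M -trmx_mul mulVmx // trmx1 contr3_id.
  rewrite /contr12 contr23C -contr12C contr2M -trmx_mul mulmxV // trmx1.
  by rewrite contr2_id contr13C.
rewrite /manin_map /dbr /=; congr pair; apply: functional_extensionality => k.
- transitivity (\sum_(i < 3) \sum_(j < 3) (u.1 i * v.1 j * contr3 A f' i j k
     + u.1 i * v.2 j * contr2 A^T ft' j k i - u.2 j * v.1 i * contr2 A^T ft' j k i)).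
    by rewrite /contr3 /contr2; expand_sums; ring.
  by rewrite -Ef Eft_mixed /contr12 /contr1 /contr2 /contr3; expand_sums; ring.
- transitivity (\sum_(i < 3) \sum_(j < 3) (u.2 i * v.2 j * contr3 (invmx A)^T ft' i j k
     + u.1 i * v.2 j * contr1 (invmx A) f' k i j
     - u.2 j * v.1 i * contr1 (invmx A) f' k i j)).
    by rewrite /contr3 /contr1; expand_sums; ring.
  by rewrite -Eft Ef_mixed /contr12 /contr1 /contr2 /contr3; expand_sums; ring.
Qed.

Lemma is_manin_basis_change : is_manin f' ft' -> is_manin f ft.
Proof.
have onto u : u = manin_map A (manin_map (invmx A) u) by rewrite manin_map_invK.
case=> Af Aft J I; split.
- apply: antisym_basis_change (basis_changeV uA Hf) Af.
  by rewrite unitmx_inv.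
- have uAt : (invmx A)^T \in unitmx by rewrite unitmx_tr unitmx_inv.
  apply: antisym_basis_change (basis_changeV uAt Hft) Aft.
  by rewrite unitmx_inv.
- move=> u v w; rewrite (onto u) (onto v) (onto w).
  by rewrite -!manin_map_dbr -!manin_map_dadd J manin_map0.
- move=> u v w; rewrite (onto u) (onto v) (onto w).
  by rewrite -!manin_map_dbr !dform_manin_map I.
Qed.

End ManinTransport.

Section ManinIso.
Variable R : realType.
Implicit Types (f ft : sc R).

Lemma manin_iso_is_manin f ft f' ft' :
  manin_iso f ft f' ft' -> is_manin f' ft' -> is_manin f ft.
Proof. by case=> A [uA Hf Hft]; exact: (is_manin_basis_change uA Hf Hft). Qed.

Lemma manin_iso_sym f ft f' ft' : manin_iso f ft f' ft' -> manin_iso f' ft' f ft.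
Proof.
case=> A [uA Hf Hft]; exists (invmx A); split; first by rewrite unitmx_inv.
- exact: basis_changeV.
- have uAt : (invmx A)^T \in unitmx by rewrite unitmx_tr unitmx_inv.
  rewrite invmxK; have := basis_changeV uAt Hft.
  by rewrite trmx_inv invmxK.
Qed.

Lemma manin_iso_trans f ft f' ft' f'' ft'' :
  manin_iso f ft f' ft' -> manin_iso f' ft' f'' ft'' -> manin_iso f ft f'' ft''.
Proof.
case=> A [uA HfA HftA] [B [uB HfB HftB]]; exists (A *m B); split.
- by rewrite unitmx_mul uA.
- exact: basis_changeM HfA HfB.
- have -> : invmx (A *m B) = invmx B *m invmx A := invrM uA uB.
  by rewrite trmx_mul; exact: basis_changeM HftA HftB.
Qed.

Lemma lie_iso_manin_iso f f' ft' : lie_iso f f' ->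
  exists ft, manin_iso f ft f' ft'.
Proof.
case=> A [uA Hf].
have uAt : (invmx A)^T \in unitmx by rewrite unitmx_tr unitmx_inv.
by have [ft Hft] := basis_change_preimage ft' uAt; exists ft, A.
Qed.

End ManinIso.

Definition dX {R : realType} (a : 'I_3) : dvec R :=
  (fun k => if k == a then 1 else 0, fun _ => 0).
Definition dXt {R : realType} (a : 'I_3) : dvec R :=
  (fun _ => 0, fun k => if k == a then 1 else 0).

Lemma dbr_dX (R : realType) (f ft : sc R) a w : dbr f ft (dX a) w =
  (fun k => \sum_(j < 3) (w.1 j * f a j k + w.2 j * ft j k a),
   fun k => \sum_(j < 3) w.2 j * f k a j).
Proof.
rewrite /dbr /dX /=; congr pair; apply: functional_extensionality => k; expand_sums;
  by case: (ord3P a) => ->; rewrite /=; ring.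
Qed.

Lemma dbr_dXt (R : realType) (f ft : sc R) a w : dbr f ft (dXt a) w =
  (fun k => - \sum_(i < 3) w.1 i * ft a k i,
   fun k => \sum_(j < 3) w.2 j * ft a j k - \sum_(i < 3) w.1 i * f k i a).
Proof.
rewrite /dbr /dXt /=; congr pair; apply: functional_extensionality => k; expand_sums;
  by case: (ord3P a) => ->; rewrite /=; ring.
Qed.

Section BianchiVII0.
Variable R : realType.
Implicit Types (ft : sc R).

Definition VII0_dual (p1 p2 p3 q2 : R) : sc R :=
  mk_sc (vec3 p1 p2 p3) (vec3 0 q2 (- p1)) (vec3 (- q2) 0 (- p2)).

Lemma VII0_dual_of_manin ft : is_manin (f_VII0 R) ft ->
  ft = VII0_dual (ft o0 o1 o0) (ft o0 o1 o1) (ft o0 o1 o2) (ft o1 o2 o1) /\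
  ft o0 o1 o2 * ft o1 o2 o1 = 0.
Proof.
case=> _ Aft J _.
have ft0 a l : ft a a l = 0 by have := Aft a a l; lra.
(* X-components of Jacobi identities of the double: five linear relations
   among the dual structure constants, and the quadratic one p3 q2 = 0 (E6). *)
have jacobi (a b : 'I_3) (w : dvec R) k := congr1 (fun p => p.1 k) (J (dX a) (dX b) w).
have E1 := jacobi o0 o1 (dXt o0) o1; have E2 := jacobi o0 o2 (dXt o0) o2.
have E3 := jacobi o0 o2 (dXt o0) o1; have E4 := jacobi o0 o2 (dXt o1) o2.
have E5 := jacobi o1 o2 (dXt o0) o1.
have E6 := congr1 (fun p => p.1 o2) (J (dX o2) (dXt o0) (dXt o1)).
move: E1 E2 E3 E4 E5 E6.
rewrite !dbr_dX !dbr_dXt /dadd /= /dX /dXt /f_VII0 /mk_sc /vec3 /v0 /=; expand_sums.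
rewrite /= !ft0 !(Aft o1 o0) !(Aft o2 o1) !(Aft o0 o2).
rewrite ?(mul0r, mulr0, mul1r, mulr1, add0r, addr0, subr0, sub0r, oppr0).
move=> E1 E2 E3 E4 E5 E6.
have q1 : ft o1 o2 o0 = 0 by lra.
have r2 : ft o2 o0 o1 = 0 by lra.
have r3 : ft o2 o0 o2 = - ft o0 o1 o1 by lra.
have q3 : ft o1 o2 o2 = - ft o0 o1 o0 by lra.
have r1 : ft o2 o0 o0 = - ft o1 o2 o1 by lra.
split; last by move: E6; rewrite r3 q3 r1; nra.
apply: sc_ext => i j k.
case: (ord3P i) => ->; case: (ord3P j) => ->; case: (ord3P k) => ->;
  rewrite /VII0_dual /mk_sc /vec3 /= ?ft0 ?(Aft o1 o0) ?(Aft o2 o1) ?(Aft o0 o2);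
  by rewrite ?q1 ?r2 ?r3 ?q3 ?r1 //; ring.
Qed.

End BianchiVII0.

Section VII0Automorphisms.
Variable R : realType.

Lemma mul_self_eq1 (e : R) : e * e = 1 -> e = 1 \/ e = -1.
Proof.
move=> ee; have : (e == 1) || (e == -1) by rewrite -sqrf_eq1 expr2 ee.
by case/orP => /eqP; [left | right].
Qed.

Definition VII0_auto (a b e x y : R) : 'M[R]_3 :=
  \matrix_(i < 3, j < 3)
    (if val i == 0%N then vec3 a b x j
     else if val i == 1%N then vec3 (- (e * b)) (e * a) y j
     else vec3 0 0 e j).

Lemma VII0_auto_basis_change a b e x y : e * e = 1 ->
  basis_change (VII0_auto a b e x y) (f_VII0 R) (f_VII0 R).
Proof.
move=> /mul_self_eq1 [] -> i j l;
  case: (ord3P i) => ->; case: (ord3P j) => ->; case: (ord3P l) => ->;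
  by rewrite /VII0_auto /f_VII0 /v0 /mk_sc /vec3; expand_sums; rewrite /=; ring.
Qed.

Lemma VII0_auto_unit a b e x y : e * e = 1 -> a * a + b * b != 0 ->
  VII0_auto a b e x y \in unitmx.
Proof.
move=> /mul_self_eq1 e1 nz; pose d := a * a + b * b.
pose C' : 'M[R]_3 := \matrix_(i < 3, j < 3)
  (if val i == 0%N then vec3 (a / d) (- (e * b) / d) (- e * (a * x - e * b * y) / d) j
   else if val i == 1%N then vec3 (b / d) (e * a / d) (- e * (b * x + e * a * y) / d) j
   else vec3 0 0 e j).
suff /mulmx1_unit[] : VII0_auto a b e x y *m C' = 1%:M by [].
apply/matrixP => i j; case: e1 => he;
  case: (ord3P i) => ->; case: (ord3P j) => ->;
  by rewrite /C' /VII0_auto; expand_sums; rewrite /vec3 /= /d ?he; field.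
Qed.

Lemma VII0_auto_form C : C \in unitmx -> basis_change C (f_VII0 R) (f_VII0 R) ->
  exists a b e x y, [/\ C = VII0_auto a b e x y, e * e = 1 & a * a + b * b != 0].
Proof.
move=> uC H.
have := H o1 o2 o2; have := H o2 o0 o2; have := H o1 o2 o1.
have := H o2 o0 o1; have := H o1 o2 o0; have := H o2 o0 o0.
rewrite /f_VII0 /mk_sc /vec3 /v0; expand_sums; rewrite /=.
rewrite ?(mul0r, mulr0, mul1r, mulr1, add0r, addr0, subr0, sub0r, oppr0).
move=> h6 h5 h4 h3 h2 h1; rewrite -h1 -h2 in h3 h4 h5 h6.
move: h3 h4 h5 h6; rewrite ?(mul0r, mulr0, add0r, addr0) => h3 h4 h5 h6.
have nz : C o0 o0 * C o0 o0 + C o0 o1 * C o0 o1 != 0.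
  apply/negP => /eqP hz.
  have ha : C o0 o0 = 0 by nra.
  have hb : C o0 o1 = 0 by nra.
  have hc : C o1 o0 = 0 by rewrite -h3 hb; ring.
  have := congr1 (fun M : 'M[R]_3 => M o0 o0) (mulVmx uC).
  rewrite /= !mxE sum3 ha hc -h1 /= !mulr0 !addr0 => /eqP.
  by rewrite eq_sym oner_eq0.
have ee : C o2 o2 * C o2 o2 = 1.
  have e1 : C o0 o0 = C o2 o2 * C o2 o2 * C o0 o0 by rewrite -{1}h5 -h4; ring.
  have e2 : C o0 o1 = C o2 o2 * C o2 o2 * C o0 o1 by rewrite -{1}h6 -h3; ring.
  have : (C o0 o0 * C o0 o0 + C o0 o1 * C o0 o1) * (1 - C o2 o2 * C o2 o2) = 0.
    rewrite [LHS](_ : _ = C o0 o0 * (C o0 o0 - C o2 o2 * C o2 o2 * C o0 o0)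
                     + C o0 o1 * (C o0 o1 - C o2 o2 * C o2 o2 * C o0 o1)); last by ring.
    by rewrite -e1 -e2 !subrr !mulr0 addr0.
  by move/eqP; rewrite mulf_eq0 (negPf nz) /= subr_eq0 => /eqP <-.
exists (C o0 o0), (C o0 o1), (C o2 o2), (C o0 o2), (C o1 o2); split => //.
apply/matrixP => i j; rewrite mxE.
case: (ord3P i) => ->; case: (ord3P j) => ->; rewrite /vec3 /= //;
  by rewrite -?h1 -?h2 -?h3 -?h4; ring.
Qed.

End VII0Automorphisms.

Section VII0DualAction.
Variable R : realType.

Lemma VII0_dual_inj (p1 p2 p3 q2 P1 P2 P3 Q2 : R) :
  VII0_dual p1 p2 p3 q2 = VII0_dual P1 P2 P3 Q2 ->
  [/\ p1 = P1, p2 = P2, p3 = P3 & q2 = Q2].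
Proof.
move=> e; have E i j k := congr1 (fun c : sc R => c i j k) e.
by split; [exact: E o0 o1 o0 | exact: E o0 o1 o1 | exact: E o0 o1 o2 |
           exact: E o1 o2 o1].
Qed.

Lemma VII0_dual_basis_change (a b e x y P1 P2 P3 Q2 : R) : e * e = 1 ->
  basis_change (VII0_auto a b e x y)^T (VII0_dual P1 P2 P3 Q2)
    (VII0_dual (e * (a * P1 + b * P2) + Q2 * y) (a * P2 - b * P1 - Q2 * x)
               ((a * a + b * b) * P3) (e * Q2)).
Proof.
move=> /mul_self_eq1 [] -> i j l;
  case: (ord3P i) => ->; case: (ord3P j) => ->; case: (ord3P l) => ->;
  by rewrite /VII0_auto /VII0_dual /mk_sc /vec3; expand_sums; rewrite /=; ring.
Qed.

Definition VII0_dual_related (p1 p2 p3 q2 P1 P2 P3 Q2 : R) : Prop :=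
  exists a b e x y, [/\ e * e = 1, a * a + b * b != 0 &
    [/\ p1 = e * (a * P1 + b * P2) + Q2 * y, p2 = a * P2 - b * P1 - Q2 * x,
        p3 = (a * a + b * b) * P3 & q2 = e * Q2]].

Lemma manin_iso_VII0_dualE (p1 p2 p3 q2 P1 P2 P3 Q2 : R) :
  manin_iso (f_VII0 R) (VII0_dual p1 p2 p3 q2) (f_VII0 R) (VII0_dual P1 P2 P3 Q2) <->
  VII0_dual_related p1 p2 p3 q2 P1 P2 P3 Q2.
Proof.
split.
- case=> A [uA HA Hd]; have [a [b [e [x [y [EA ee nz]]]]]] := VII0_auto_form uA HA.
  have uAt : (invmx A)^T \in unitmx by rewrite unitmx_tr unitmx_inv.
  have := basis_changeV uAt Hd; rewrite trmx_inv invmxK EA => Hd'.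
  have uCt : (VII0_auto a b e x y)^T \in unitmx by rewrite unitmx_tr -EA.
  have := VII0_dual_basis_change a b x y P1 P2 P3 Q2 ee.
  move=> /(basis_change_uniq uCt Hd') /VII0_dual_inj[].
  by exists a, b, e, x, y.
- case=> a [b [e [x [y [ee nz [-> -> -> ->]]]]]].
  have uC := VII0_auto_unit x y ee nz.
  exists (VII0_auto a b e x y); split => //; first exact: VII0_auto_basis_change.
  have uCt : (VII0_auto a b e x y)^T \in unitmx by rewrite unitmx_tr.
  rewrite trmx_inv; apply: basis_changeV uCt _.
  exact: VII0_dual_basis_change.
Qed.

End VII0DualAction.

Section VII0NormalForm.
Variable R : realType.
Implicit Types (c : dual_case R).

Definition case_p2 c : R :=
  match c with CaseIV b => - b | CaseVi => -1 | _ => 0 end.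
Definition case_p3 c : R :=
  match c with CaseIIi => 1 | CaseIIii => -1 | CaseIV b => b | _ => 0 end.
Definition case_q2 c : R :=
  match c with CaseVii b => b | _ => 0 end.

Lemma case_sc_VII0_dual c : case_sc c = VII0_dual 0 (case_p2 c) (case_p3 c) (case_q2 c).
Proof.
apply: sc_ext => i j k.
case: c => [|||b||b];
  case: (ord3P i) => ->; case: (ord3P j) => ->; case: (ord3P k) => ->;
  by rewrite /case_sc /v0 /VII0_dual /mk_sc /vec3 /=; ring.
Qed.

Definition case_dual_related c :=
  VII0_dual_related 0 (case_p2 c) (case_p3 c) (case_q2 c).

Lemma VII0_dual_normal_form_p0 (P3 : R) : exists c, case_valid c /\
  case_dual_related c 0 0 P3 0.
Proof.
have sqrt_inv (t : R) : 0 < t -> Num.sqrt t^-1 * Num.sqrt t^-1 = t^-1.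
  by move=> t0; rewrite -expr2 sqr_sqrtr // invr_ge0 ltW.
case: (ltrgtP P3 0) => h3.
- exists (CaseIIii R); split => //.
  have t0 : 0 < - P3 by rewrite oppr_gt0.
  exists (Num.sqrt (- P3)^-1), 0, 1, 0, 0; split; first by rewrite mulr1.
    by rewrite mulr0 addr0 sqrt_inv // invr_eq0 lt0r_neq0.
  split=> /=; try ring.
  by rewrite mulr0 addr0 sqrt_inv //; field; exact: ltr0_neq0.
- exists (CaseIIi R); split => //.
  exists (Num.sqrt P3^-1), 0, 1, 0, 0; split; first by rewrite mulr1.
    by rewrite mulr0 addr0 sqrt_inv // invr_eq0 lt0r_neq0.
  split=> /=; try ring.
  by rewrite mulr0 addr0 sqrt_inv //; field; exact: lt0r_neq0.
- exists (CaseI R); split => //.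
  exists 1, 0, 1, 0, 0; split; rewrite ?mulr0 ?addr0 ?mulr1 ?oner_eq0 //.
  by split=> /=; rewrite ?h3; ring.
Qed.

Lemma VII0_dual_normal_form_q0 (P1 P2 P3 : R) : P1 * P1 + P2 * P2 != 0 ->
  exists c, case_valid c /\ case_dual_related c P1 P2 P3 0.
Proof.
move=> nP; set n := P1 * P1 + P2 * P2 in nP *.
have [h3|h3] := eqVneq P3 0.
- exists (CaseVi R); split => //.
  exists (- P2 / n), (P1 / n), 1, 0, 0; split; first by rewrite mulr1.
    have -> : - P2 / n * (- P2 / n) + P1 / n * (P1 / n) = n^-1 by rewrite /n; field.
    by rewrite invr_eq0.
  by split=> /=; rewrite ?h3 /n; field.
- exists (CaseIV (n / P3)); split; first by rewrite /= mulf_neq0 // invr_eq0.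
  exists (- P2 / P3), (P1 / P3), 1, 0, 0; split; first by rewrite mulr1.
    have -> : - P2 / P3 * (- P2 / P3) + P1 / P3 * (P1 / P3) = n / (P3 * P3).
      by rewrite /n; field.
    by rewrite mulf_neq0 // invr_eq0 mulf_neq0.
  by split=> /=; rewrite /n; field.
Qed.

Lemma VII0_dual_normal_form_p3 (P1 P2 Q2 : R) : Q2 != 0 ->
  exists c, case_valid c /\ case_dual_related c P1 P2 0 Q2.
Proof.
move=> nQ; case: (ltrgtP Q2 0) => hQ; last by rewrite hQ eqxx in nQ.
- exists (CaseVii (- Q2)); split; first by rewrite /= oppr_gt0.
  exists 1, 0, (-1), (P2 / Q2), (P1 / Q2).
  split; rewrite ?mulrNN ?mulr1 ?mulr0 ?addr0 ?oner_eq0 //.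
  by split=> /=; field.
- exists (CaseVii Q2); split => //.
  exists 1, 0, 1, (P2 / Q2), (- P1 / Q2).
  split; rewrite ?mulr1 ?mulr0 ?addr0 ?oner_eq0 //.
  by split=> /=; field.
Qed.

Lemma VII0_dual_normal_form (P1 P2 P3 Q2 : R) : P3 * Q2 = 0 ->
  exists c, case_valid c /\ case_dual_related c P1 P2 P3 Q2.
Proof.
move=> hPQ; have [-> | nQ] := eqVneq Q2 0; last first.
  move: hPQ => /eqP; rewrite mulf_eq0 (negPf nQ) orbF => /eqP ->.
  exact: VII0_dual_normal_form_p3.
have [hP | nP] := eqVneq (P1 * P1 + P2 * P2) 0; last exact: VII0_dual_normal_form_q0.
have -> : P1 = 0 by move/eqP: hP; nra.
have -> : P2 = 0 by move/eqP: hP; nra.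
exact: VII0_dual_normal_form_p0.
Qed.

Lemma VII0_dual_related_case_inj c1 c2 : case_valid c1 -> case_valid c2 ->
  case_dual_related c1 0 (case_p2 c2) (case_p3 c2) (case_q2 c2) -> c1 = c2.
Proof.
move=> v1 v2 [a [b [e [x [y [ee nz [h1 h2 h3 h4]]]]]]].
have sq_gt0 (t : R) : t != 0 -> 0 < t * t.
  by move=> t0; rewrite -expr2 exprn_even_gt0 //= t0.
have d_gt0 : 0 < a * a + b * b by rewrite lt0r nz /=; nra.
have q_sq : case_q2 c1 * case_q2 c1 = case_q2 c2 * case_q2 c2.
  by rewrite h4 mulrACA ee mul1r.
have p2_sq : case_q2 c2 = 0 ->
    case_p2 c1 * case_p2 c1 = (a * a + b * b) * (case_p2 c2 * case_p2 c2).
  move=> q0; rewrite q0 !mul0r !mulr0 !add0r !addr0 in h1 h2.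
  have bp : b * case_p2 c2 = 0 by rewrite -[LHS]mul1r -ee -mulrA -h1 mulr0.
  rewrite h2; transitivity (a * a * (case_p2 c2 * case_p2 c2)
                            + (b * case_p2 c2) * (b * case_p2 c2)); last ring.
  by rewrite bp; ring.
move: v1 v2 h3 q_sq p2_sq; clear h1 h2 h4.
case: c1 => [|||b1||b1]; case: c2 => [|||b2||b2] //= v1 v2 h3 q_sq p2_sq //.
all: try have hb1 := sq_gt0 _ v1; try have hb2 := sq_gt0 _ v2.
all: try have {}p2_sq := p2_sq erefl.
all: try (exfalso; nra).
- congr CaseIV; apply: (mulfI v1).
  transitivity (- b1 * - b1); first by rewrite mulrNN.
  by rewrite p2_sq mulrNN mulrA -h3.
- congr CaseVii.
  have : (b1 - b2) * (b1 + b2) = 0 by rewrite -subr_sqr !expr2 q_sq subrr.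
  by move/eqP; rewrite mulf_eq0 subr_eq0 => /orP[/eqP // | /eqP]; lra.
Qed.

End VII0NormalForm.

Lemma manin_VII0_normal_form (R : realType) (ft : sc R) : is_manin (f_VII0 R) ft ->
  exists c, case_valid c /\ manin_iso (f_VII0 R) (case_sc c) (f_VII0 R) ft.
Proof.
move=> /VII0_dual_of_manin [E hPQ].
have [c [vc rel]] := VII0_dual_normal_form (ft o0 o1 o0) (ft o0 o1 o1) hPQ.
by exists c; split => //; rewrite E case_sc_VII0_dual; apply/manin_iso_VII0_dualE.
Qed.

Lemma manin_iso_case_sc_inj (R : realType) (c1 c2 : dual_case R) :
  case_valid c1 -> case_valid c2 ->
  manin_iso (f_VII0 R) (case_sc c1) (f_VII0 R) (case_sc c2) -> c1 = c2.
Proof.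
move=> v1 v2; rewrite !case_sc_VII0_dual => /manin_iso_VII0_dualE.
exact: VII0_dual_related_case_inj.
Qed.

Theorem mainTheorem4 (R : realType) (f' ft' : sc R) :
  is_manin f' ft' -> lie_iso (f_VII0 R) f' ->
  exists! c : dual_case R,
    case_valid c /\ manin_iso (f_VII0 R) (case_sc c) f' ft'.
Proof.
move=> Hm /(lie_iso_manin_iso ft') [ft iso_ft].
have [c [vc iso_c]] := manin_VII0_normal_form (manin_iso_is_manin iso_ft Hm).
have iso_c' := manin_iso_trans iso_c iso_ft.
exists c; split => // c' [vc' iso'].
exact: manin_iso_case_sc_inj vc vc' (manin_iso_trans iso_c' (manin_iso_sym iso')).
Qed.
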